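(* Consider the WBDF4 coefficients $(a_0,\dots,a_3)=\big(\tfrac{22\alpha+3}{12},\tfrac{13-36\alpha}{12},\tfrac{18\alpha-5}{12},\tfrac{1-4\alpha}{12}\big)$, $(b_0,\dots,b_4)=(\alpha,1-\alpha,0,0,0)$, $(c_0,\dots,c_3)=(3\alpha+1,-6\alpha,4\alpha,-\alpha)$. For $\alpha\ge1$, $$\sigma_{\mathrm{F}}\ge1,\quad\sigma_{\mathrm{E}}\ge\frac{3(14\alpha+1)}{4(5\alpha-1)},\quad\lambda_{\mathrm{I}}\le\frac{3(2\alpha-1)}{4(5\alpha-1)},\quad\mathfrak{I}_{\mathrm{IE}}\le\frac{2\alpha-1}{14\alpha+1};$$ and for $\alpha\ge6/5$ all four relations hold with equality.
   Context: For coefficient vectors $(a_j)_{j=0}^{\mathrm{k}-1}$, $(b_j)_{j=0}^{\mathrm{k}}$, $(c_j)_{j=0}^{\mathrm{k}-1}$ define $a(\theta)=\sum_j a_je^{\imath j\theta}$, $b(\theta)=\sum_j b_je^{\imath j\theta}$, $c(\theta)=\sum_jc_je^{\imath j\theta}$ and $\sigma_{\mathrm{F}}=\max_{\theta\in[0,2\pi)}|1/a(\theta)|$, $\sigma_{\mathrm{E}}=\max_{\theta\in[0,2\pi)}|c(\theta)/a(\theta)|$, $\lambda_{\mathrm{I}}=\min_{\theta\in[0,2\pi)}\Re[b(\theta)/a(\theta)]$, $\mathfrak{I}_{\mathrm{IE}}=\lambda_{\mathrm{I}}/\sigma_{\mathrm{E}}$. Here $\mathrm{k}=4$. *)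

From Stdlib Require Import Reals List.
From Coquelicot Require Import Coquelicot.
Open Scope R_scope.

Definition eit (t : R) : C := (cos t, sin t).

Definition tpoly (cf : list R) (t : R) : C :=
  fold_right Cplus (RtoC 0)
    (map (fun j => Cmult (RtoC (nth j cf 0)) (eit (INR j * t)))
         (seq 0 (length cf))).

Definition img (f : R -> R) : R -> Prop :=
  fun x => exists t, 0 <= t < 2 * PI /\ x = f t.

(* max / min over theta in [0,2pi) taken as sup / inf in the extended reals *)
Definition sigmaF (a : list R) : Rbar :=
  Lub_Rbar (img (fun t => Cmod (Cinv (tpoly a t)))).
Definition sigmaE (a c : list R) : Rbar :=
  Lub_Rbar (img (fun t => Cmod (Cdiv (tpoly c t) (tpoly a t)))).
Definition lambdaI (a b : list R) : Rbar :=
  Glb_Rbar (img (fun t => Re (Cdiv (tpoly b t) (tpoly a t)))).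
Definition IIE (a b c : list R) : Rbar :=
  Rbar_div (lambdaI a b) (sigmaE a c).

Definition wbdf4_a (al : R) : list R :=
  (22 * al + 3) / 12 :: (13 - 36 * al) / 12 :: (18 * al - 5) / 12 :: (1 - 4 * al) / 12 :: nil.
Definition wbdf4_b (al : R) : list R := al :: 1 - al :: 0 :: 0 :: 0 :: nil.
Definition wbdf4_c (al : R) : list R := 3 * al + 1 :: - (6 * al) :: 4 * al :: - al :: nil.

(* With x = cos θ, a trigonometric polynomial Σ c_j e^{ijθ} equals P(x) + i sin θ Q(x)
   with P, Q given by the Chebyshev recurrences, so |a|^2, |c|^2 and Re (b conj a) are
   polynomials in x ∈ [-1, 1].  The lower bounds are the values at θ = 0, where a = 1,
   and at θ = π, where a = 4(5α-1)/3, b = 2α-1 and c = 14α+1.  For α ≥ 6/5 these values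
   are the extrema, which reduces to three polynomial inequalities on [-1, 1] with
   explicit nonnegativity certificates; the bounds on 𝔍_IE then follow by division. *)
From Stdlib Require Import Reals List Lra Psatz.
From Coquelicot Require Import Coquelicot.
Open Scope R_scope.

Fixpoint chebT (n : nat) (x : R) : R :=
  match n with
  | O => 1
  | S O => x
  | S (S m as k) => 2 * x * chebT k x - chebT m x
  end.

(* Shifted by one from the usual U_n: [chebU n] is U_(n-1), so that
   sin (n t) = sin t * chebU n (cos t) holds with the same index as for [chebT]. *)
Fixpoint chebU (n : nat) (x : R) : R :=
  match n with
  | O => 0
  | S O => 1
  | S (S m as k) => 2 * x * chebU k x - chebU m x
  end.

Lemma chebT_SS n x : chebT (S (S n)) x = 2 * x * chebT (S n) x - chebT n x.
Proof. reflexivity. Qed.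

Lemma chebU_SS n x : chebU (S (S n)) x = 2 * x * chebU (S n) x - chebU n x.
Proof. reflexivity. Qed.

Lemma cos_sin_INR_mult n t :
  cos (INR n * t) = chebT n (cos t) /\ sin (INR n * t) = sin t * chebU n (cos t).
Proof.
  pose (P k := cos (INR k * t) = chebT k (cos t) /\ sin (INR k * t) = sin t * chebU k (cos t)).
  enough (H : forall k, P k /\ P (S k)) by apply (H n).
  induction k as [|k [[IHc IHs] [IHSc IHSs]]].
  - unfold P; cbn [INR chebT chebU].
    rewrite Rmult_0_l, Rmult_1_l, cos_0, sin_0.
    repeat split; ring.
  - split; [split; assumption|].
    set (a := INR (S k) * t) in *.
    assert (Hplus : INR (S (S k)) * t = a + t) by (unfold a; rewrite (S_INR (S k)); ring).
    assert (Hminus : INR k * t = a - t) by (unfold a; rewrite S_INR; ring).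
    rewrite Hminus, cos_minus in IHc; rewrite Hminus, sin_minus in IHs.
    unfold P; rewrite Hplus, chebT_SS, chebU_SS, cos_plus, sin_plus.
    split.
    + rewrite <- IHc, <- IHSc; ring.
    + transitivity (2 * cos t * sin a - (sin a * cos t - cos a * sin t)); [ring|].
      rewrite IHs, IHSs; ring.
Qed.

Definition cheb_re (cf : list R) (x : R) : R :=
  fold_right Rplus 0 (map (fun j => nth j cf 0 * chebT j x) (seq 0 (length cf))).
Definition cheb_im (cf : list R) (x : R) : R :=
  fold_right Rplus 0 (map (fun j => nth j cf 0 * chebU j x) (seq 0 (length cf))).

Lemma tpoly_chebyshev cf t : tpoly cf t = (cheb_re cf (cos t), sin t * cheb_im cf (cos t)).
Proof.
  unfold tpoly, cheb_re, cheb_im.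
  induction (seq 0 (length cf)) as [|j js IH]; cbn [map fold_right].
  - unfold RtoC; f_equal; ring.
  - rewrite IH; unfold eit.
    destruct (cos_sin_INR_mult j t) as [-> ->].
    unfold Cplus, Cmult, RtoC; cbn [fst snd]; f_equal; ring.
Qed.

Definition cheb_dot (f g : list R) (x : R) : R :=
  cheb_re f x * cheb_re g x + (1 - x ^ 2) * cheb_im f x * cheb_im g x.

Lemma Re_tpoly_mul_Cconj f g t :
  Re (tpoly f t * Cconj (tpoly g t)) = cheb_dot f g (cos t).
Proof.
  rewrite !tpoly_chebyshev; unfold cheb_dot, Cmult, Cconj, Re; cbn [fst snd].
  pose proof (sin2_cos2 t) as Hsc; unfold Rsqr in Hsc.
  replace (1 - cos t ^ 2) with (sin t * sin t) by lra; ring.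
Qed.

Lemma Cmod_tpoly_sqr f t : Cmod (tpoly f t) ^ 2 = cheb_dot f f (cos t).
Proof.
  now rewrite <- Re_tpoly_mul_Cconj, <- Cmod2_conj, re_RtoC.
Qed.

Lemma tpoly_0 cf : tpoly cf 0 = RtoC (cheb_re cf 1).
Proof. rewrite tpoly_chebyshev, cos_0, sin_0; unfold RtoC; f_equal; ring. Qed.

Lemma tpoly_PI cf : tpoly cf PI = RtoC (cheb_re cf (-1)).
Proof. rewrite tpoly_chebyshev, cos_PI, sin_PI; unfold RtoC; f_equal; ring. Qed.

Lemma Cmod_inv_le_1 (z : C) : 1 <= Cmod z -> Cmod (/ z) <= 1.
Proof.
  intros H1.
  rewrite Cmod_inv by (apply Cmod_gt_0; lra).
  rewrite <- Rinv_1; apply Rinv_le_contravar; lra.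
Qed.

Lemma Cmod_div_le (z w : C) K :
  0 <= K -> 0 < Cmod w -> Cmod z ^ 2 <= K ^ 2 * Cmod w ^ 2 -> Cmod (z / w) <= K.
Proof.
  intros HK Hw Hzw.
  rewrite Cmod_div by (apply Cmod_gt_0; lra).
  apply Rle_div_l; [lra|].
  pose proof (Cmod_ge_0 z).
  assert (0 <= K * Cmod w) by (apply Rmult_le_pos; lra).
  nra.
Qed.

Lemma Re_div_ge (z w : C) L :
  0 < Cmod w -> L * Cmod w ^ 2 <= Re (z * Cconj w) -> L <= Re (z / w).
Proof.
  intros Hw Hzw.
  assert (Hw2 : 0 < Cmod w ^ 2) by (apply pow_lt; lra).
  rewrite Cmod2_alt in Hw2, Hzw.
  destruct z as [p q], w as [x y].
  unfold Cdiv, Cinv, Cmult, Cconj, Re, Im in *; cbn [fst snd] in *.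
  replace (p * (x / (x ^ 2 + y ^ 2)) - q * (- y / (x ^ 2 + y ^ 2)))
    with ((p * x - q * - y) / (x ^ 2 + y ^ 2)) by (field; lra).
  apply Rle_div_r; lra.
Qed.

Lemma Lub_img_ge (f : R -> R) t m :
  0 <= t < 2 * PI -> f t = m -> Rbar_le m (Lub_Rbar (img f)).
Proof. intros Ht <-; apply (Lub_Rbar_correct (img f)); now exists t. Qed.

Lemma Glb_img_le (f : R -> R) t m :
  0 <= t < 2 * PI -> f t = m -> Rbar_le (Glb_Rbar (img f)) m.
Proof. intros Ht <-; apply (Glb_Rbar_correct (img f)); now exists t. Qed.

Lemma Lub_img_attained (f : R -> R) t0 :
  0 <= t0 < 2 * PI -> (forall t, f t <= f t0) -> Lub_Rbar (img f) = f t0.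
Proof.
  intros Ht0 Hmax; apply is_lub_Rbar_unique; split.
  - intros x [t [_ ->]]; apply Hmax.
  - intros b Hb; apply Hb; now exists t0.
Qed.

Lemma Glb_img_attained (f : R -> R) t0 :
  0 <= t0 < 2 * PI -> (forall t, f t0 <= f t) -> Glb_Rbar (img f) = f t0.
Proof.
  intros Ht0 Hmin; apply is_glb_Rbar_unique; split.
  - intros x [t [_ ->]]; apply Hmin.
  - intros b Hb; apply Hb; now exists t0.
Qed.

Lemma Rbar_div_le_div (l s : Rbar) (L S : R) :
  0 <= L -> 0 < S -> Rbar_le l L -> Rbar_le S s -> Rbar_le (Rbar_div l s) (L / S).
Proof.
  intros HL HS Hl Hs.
  assert (HLS : 0 <= L / S) by (apply Rdiv_le_0_compat; lra).
  destruct l as [l| |], s as [s| |]; cbn in Hl, Hs |- *; try contradiction.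
  - apply Rle_trans with (L / s).
    + apply Rmult_le_compat_r; [left; apply Rinv_0_lt_compat|]; lra.
    + apply Rmult_le_compat_l; [|apply Rinv_le_contravar]; lra.
  - now rewrite Rmult_0_r.
  - destruct (Rle_dec 0 (/ s)) as [Hs'|Hs'].
    + destruct (Rle_lt_or_eq_dec 0 (/ s) Hs'); cbn; auto.
    + exfalso; apply Hs'; left; apply Rinv_0_lt_compat; lra.
  - destruct (Rle_dec 0 0) as [H0|H0]; [|lra].
    destruct (Rle_lt_or_eq_dec 0 0 H0); cbn; auto; lra.
Qed.

(* With b = al - 6/5, u = 1 - x and v = 1 + x, all nonnegative, each
   difference below is (1 - x) or (1 + x) times a quadratic form in (u, v) whose
   coefficients are polynomials in b; the linear factor vanishes where the extremum is
   attained (x = 1, i.e. theta = 0, for [sigmaF]; x = -1, i.e. theta = pi, otherwise). *)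
Lemma wbdf4_sqnorm_a_ge_1 al x :
  6 / 5 <= al -> -1 <= x <= 1 -> 1 <= cheb_dot (wbdf4_a al) (wbdf4_a al) x.
Proof.
  intros Hal Hx.
  set (b := al - 6 / 5); set (u := 1 - x); set (v := 1 + x).
  assert (Hb : 0 <= b) by (unfold b; lra).
  assert (Hu : 0 <= u) by (unfold u; lra).
  assert (Hv : 0 <= v) by (unfold v; lra).
  set (N := (97/600 + 7/10 * b + 1/2 * b ^ 2) * v ^ 2
          + (-553/900 + 19/30 * b + 7/6 * b ^ 2) * u * v
          + (391/72 + 100/9 * b + 50/9 * b ^ 2) * u ^ 2).
  assert (HN : 0 <= N).
  { assert (0 <= 97/600 * v ^ 2 - 553/900 * u * v + 391/72 * u ^ 2) by nra.
    assert (0 <= u * v) by nra.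
    unfold N; nra. }
  replace (cheb_dot _ _ x) with (1 + u * N)
    by (unfold N, b, u, v, cheb_dot, cheb_re, cheb_im, wbdf4_a; simpl; field).
  nra.
Qed.

Lemma wbdf4_sqnorm_c_le al x :
  6 / 5 <= al -> -1 <= x <= 1 ->
  16 * (5 * al - 1) ^ 2 * cheb_dot (wbdf4_c al) (wbdf4_c al) x
  <= 9 * (14 * al + 1) ^ 2 * cheb_dot (wbdf4_a al) (wbdf4_a al) x.
Proof.
  intros Hal Hx.
  set (b := al - 6 / 5); set (u := 1 - x); set (v := 1 + x).
  assert (Hb : 0 <= b) by (unfold b; lra).
  assert (Hu : 0 <= u) by (unfold u; lra).
  assert (Hv : 0 <= v) by (unfold v; lra).
  set (N := (61289/200 + 4607/10 * b + 341/2 * b ^ 2) * v ^ 2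
          + (3330843/2500 + 931841/250 * b + 227719/50 * b ^ 2 + 13988/5 * b ^ 3
             + 682 * b ^ 4) * u * v
          + (4956049/5000 + 639992/125 * b + 227483/25 * b ^ 2 + 32952/5 * b ^ 3
             + 1658 * b ^ 4) * u ^ 2).
  assert (HN : 0 <= N).
  { assert (0 <= b ^ 2) by nra. assert (0 <= b ^ 3) by (apply pow_le; lra).
    assert (0 <= b ^ 4) by (apply pow_le; lra). assert (0 <= u * v) by nra.
    assert (0 <= u ^ 2) by nra. assert (0 <= v ^ 2) by nra.
    unfold N; repeat apply Rplus_le_le_0_compat; apply Rmult_le_pos; nra. }
  apply Rminus_le_0.
  replace (_ - _) with (v * N)
    by (unfold N, b, u, v, cheb_dot, cheb_re, cheb_im, wbdf4_a, wbdf4_c; simpl; field).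
  nra.
Qed.

Lemma wbdf4_dot_b_a_ge al x :
  6 / 5 <= al -> -1 <= x <= 1 ->
  3 * (2 * al - 1) * cheb_dot (wbdf4_a al) (wbdf4_a al) x
  <= 4 * (5 * al - 1) * cheb_dot (wbdf4_b al) (wbdf4_a al) x.
Proof.
  intros Hal Hx.
  set (b := al - 6 / 5); set (u := 1 - x); set (v := 1 + x).
  assert (Hb : 0 <= b) by (unfold b; lra).
  assert (Hu : 0 <= u) by (unfold u; lra).
  assert (Hv : 0 <= v) by (unfold v; lra).
  set (N := (79/40 + 7/4 * b) * v ^ 2
          + (10219/1500 + 1268/75 * b + 177/10 * b ^ 2 + 7 * b ^ 3) * u * v
          + (1517/3000 + 1161/100 * b + 213/10 * b ^ 2 + 29/3 * b ^ 3) * u ^ 2).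
  assert (HN : 0 <= N).
  { assert (0 <= b ^ 2) by nra. assert (0 <= b ^ 3) by (apply pow_le; lra).
    assert (0 <= u * v) by nra.
    assert (0 <= u ^ 2) by nra. assert (0 <= v ^ 2) by nra.
    unfold N; repeat apply Rplus_le_le_0_compat; apply Rmult_le_pos; nra. }
  apply Rminus_le_0.
  replace (_ - _) with (v * N)
    by (unfold N, b, u, v, cheb_dot, cheb_re, cheb_im, wbdf4_a, wbdf4_b; simpl; field).
  nra.
Qed.

Lemma wbdf4_Cmod_a_ge_1 al t : 6 / 5 <= al -> 1 <= Cmod (tpoly (wbdf4_a al) t).
Proof.
  intros Hal.
  pose proof (wbdf4_sqnorm_a_ge_1 al (cos t) Hal (COS_bound t)) as H.
  rewrite <- Cmod_tpoly_sqr in H.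
  pose proof (Cmod_ge_0 (tpoly (wbdf4_a al) t)); nra.
Qed.

Lemma wbdf4_at_PI al :
  tpoly (wbdf4_a al) PI = RtoC (4 * (5 * al - 1) / 3)
  /\ tpoly (wbdf4_b al) PI = RtoC (2 * al - 1)
  /\ tpoly (wbdf4_c al) PI = RtoC (14 * al + 1).
Proof.
  rewrite !tpoly_PI; unfold cheb_re, wbdf4_a, wbdf4_b, wbdf4_c; simpl.
  repeat split; f_equal; field.
Qed.

Lemma wbdf4_sigmaF_at_0 al : Cmod (/ tpoly (wbdf4_a al) 0) = 1.
Proof.
  rewrite tpoly_0.
  replace (cheb_re (wbdf4_a al) 1) with 1
    by (unfold cheb_re, wbdf4_a; simpl; field).
  rewrite <- RtoC_inv, Rinv_1, Cmod_R by lra; apply Rabs_R1.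
Qed.

Lemma wbdf4_sigmaE_at_PI al :
  1 <= al ->
  Cmod (tpoly (wbdf4_c al) PI / tpoly (wbdf4_a al) PI)
  = 3 * (14 * al + 1) / (4 * (5 * al - 1)).
Proof.
  intros Hal; destruct (wbdf4_at_PI al) as (-> & _ & ->).
  rewrite <- RtoC_div, Cmod_R by lra.
  rewrite Rabs_pos_eq by (apply Rdiv_le_0_compat; lra).
  field; lra.
Qed.

Lemma wbdf4_lambdaI_at_PI al :
  1 <= al ->
  Re (tpoly (wbdf4_b al) PI / tpoly (wbdf4_a al) PI)
  = 3 * (2 * al - 1) / (4 * (5 * al - 1)).
Proof.
  intros Hal; destruct (wbdf4_at_PI al) as (-> & -> & _).
  rewrite <- RtoC_div, re_RtoC by lra.
  field; lra.
Qed.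

Lemma zero_in_period : 0 <= 0 < 2 * PI.
Proof. pose proof PI_RGT_0; lra. Qed.

Lemma PI_in_period : 0 <= PI < 2 * PI.
Proof. pose proof PI_RGT_0; lra. Qed.

Lemma wbdf4_sigmaF_ge_1 al : Rbar_le 1 (sigmaF (wbdf4_a al)).
Proof. apply (Lub_img_ge _ 0); [apply zero_in_period | apply wbdf4_sigmaF_at_0]. Qed.

Lemma wbdf4_sigmaE_ge al :
  1 <= al ->
  Rbar_le (3 * (14 * al + 1) / (4 * (5 * al - 1))) (sigmaE (wbdf4_a al) (wbdf4_c al)).
Proof.
  intros Hal; apply (Lub_img_ge _ PI);
    [apply PI_in_period | now apply wbdf4_sigmaE_at_PI].
Qed.

Lemma wbdf4_lambdaI_le al :
  1 <= al ->
  Rbar_le (lambdaI (wbdf4_a al) (wbdf4_b al)) (3 * (2 * al - 1) / (4 * (5 * al - 1))).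
Proof.
  intros Hal; apply (Glb_img_le _ PI);
    [apply PI_in_period | now apply wbdf4_lambdaI_at_PI].
Qed.

Lemma wbdf4_sigmaF_eq al : 6 / 5 <= al -> sigmaF (wbdf4_a al) = Finite 1.
Proof.
  intros Hal; unfold sigmaF.
  rewrite (Lub_img_attained _ 0), wbdf4_sigmaF_at_0; [reflexivity | apply zero_in_period|].
  intros t; rewrite wbdf4_sigmaF_at_0.
  apply Cmod_inv_le_1, wbdf4_Cmod_a_ge_1, Hal.
Qed.

Lemma wbdf4_sigmaE_eq al :
  6 / 5 <= al ->
  sigmaE (wbdf4_a al) (wbdf4_c al) = Finite (3 * (14 * al + 1) / (4 * (5 * al - 1))).
Proof.
  intros Hal; unfold sigmaE.
  rewrite (Lub_img_attained _ PI); [| apply PI_in_period |].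
  { now rewrite wbdf4_sigmaE_at_PI by lra. }
  intros t; rewrite wbdf4_sigmaE_at_PI by lra.
  pose proof (wbdf4_Cmod_a_ge_1 al t Hal).
  apply Cmod_div_le; [apply Rdiv_le_0_compat; lra | lra |].
  rewrite !Cmod_tpoly_sqr.
  apply Rmult_le_reg_l with (16 * (5 * al - 1) ^ 2); [nra|].
  replace (16 * (5 * al - 1) ^ 2 * ((3 * (14 * al + 1) / (4 * (5 * al - 1))) ^ 2 * _))
    with (9 * (14 * al + 1) ^ 2 * cheb_dot (wbdf4_a al) (wbdf4_a al) (cos t))
    by (field; lra).
  apply wbdf4_sqnorm_c_le; [exact Hal | apply COS_bound].
Qed.

Lemma wbdf4_lambdaI_eq al :
  6 / 5 <= al ->
  lambdaI (wbdf4_a al) (wbdf4_b al) = Finite (3 * (2 * al - 1) / (4 * (5 * al - 1))).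
Proof.
  intros Hal; unfold lambdaI.
  rewrite (Glb_img_attained _ PI); [| apply PI_in_period |].
  { now rewrite wbdf4_lambdaI_at_PI by lra. }
  intros t; rewrite wbdf4_lambdaI_at_PI by lra.
  pose proof (wbdf4_Cmod_a_ge_1 al t Hal).
  apply Re_div_ge; [lra |].
  rewrite Cmod_tpoly_sqr, Re_tpoly_mul_Cconj.
  apply Rmult_le_reg_l with (4 * (5 * al - 1)); [lra|].
  replace (4 * (5 * al - 1) * (3 * (2 * al - 1) / (4 * (5 * al - 1)) * _))
    with (3 * (2 * al - 1) * cheb_dot (wbdf4_a al) (wbdf4_a al) (cos t))
    by (field; lra).
  apply wbdf4_dot_b_a_ge; [exact Hal | apply COS_bound].
Qed.

Theorem mainTheorem5 (al : R) (hal : 1 <= al) :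
  (Rbar_le 1 (sigmaF (wbdf4_a al))
   /\ Rbar_le (3 * (14 * al + 1) / (4 * (5 * al - 1))) (sigmaE (wbdf4_a al) (wbdf4_c al))
   /\ Rbar_le (lambdaI (wbdf4_a al) (wbdf4_b al)) (3 * (2 * al - 1) / (4 * (5 * al - 1)))
   /\ Rbar_le (IIE (wbdf4_a al) (wbdf4_b al) (wbdf4_c al)) ((2 * al - 1) / (14 * al + 1)))
  /\ (6 / 5 <= al ->
      sigmaF (wbdf4_a al) = Finite 1
      /\ sigmaE (wbdf4_a al) (wbdf4_c al) = Finite (3 * (14 * al + 1) / (4 * (5 * al - 1)))
      /\ lambdaI (wbdf4_a al) (wbdf4_b al) = Finite (3 * (2 * al - 1) / (4 * (5 * al - 1)))
      /\ IIE (wbdf4_a al) (wbdf4_b al) (wbdf4_c al) = Finite ((2 * al - 1) / (14 * al + 1))).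
Proof.
  assert (Hratio : 3 * (2 * al - 1) / (4 * (5 * al - 1)) / (3 * (14 * al + 1) / (4 * (5 * al - 1)))
                   = (2 * al - 1) / (14 * al + 1)) by (field; lra).
  split.
  - split; [apply wbdf4_sigmaF_ge_1 | split; [now apply wbdf4_sigmaE_ge |]].
    split; [now apply wbdf4_lambdaI_le |].
    unfold IIE; rewrite <- Hratio.
    apply Rbar_div_le_div; [| | now apply wbdf4_lambdaI_le | now apply wbdf4_sigmaE_ge].
    + apply Rdiv_le_0_compat; lra.
    + apply Rdiv_lt_0_compat; lra.
  - intros Hal.
    split; [now apply wbdf4_sigmaF_eq |].
    split; [now apply wbdf4_sigmaE_eq |].
    split; [now apply wbdf4_lambdaI_eq |].
    unfold IIE; rewrite wbdf4_sigmaE_eq, wbdf4_lambdaI_eq by exact Hal.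
    cbn; now rewrite <- Hratio.
Qed.
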